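(* Let \(s\ge 0\) be an integer and let \(G\) be a graph with \(\mathrm{surplus}(G)\geq s\). Then deleting any subset of \(s\) vertices from \(G\) results in a graph \(G'\) such that \(LP(G')=LP(G)-\frac{s}{2}\).
   Context: All graphs are finite, undirected and simple. For \(X\subseteq V(G)\), \(N(X)\) is the set of vertices not in \(X\) adjacent to some vertex of \(X\). The surplus of an independent set \(X\) is \(\mathrm{surplus}(X)=|N(X)|-|X|\); the surplus \(\mathrm{surplus}(G)\) of a graph is the minimum surplus over all nonempty independent sets of \(G\). \(LP(G)\) is the optimum value of the linear program: minimize \(\sum_{v\in V(G)}x_v\) subject to \(x_u+x_v\ge 1\) for every edge \(\{u,v\}\in E(G)\) and \(0\le x_v\le 1\) for every \(v\in V(G)\). *)

From mathcomp Require Import all_boot all_order all_algebra.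
From mathcomp Require Import boolp classical_sets reals.
Set Implicit Arguments. Unset Strict Implicit. Unset Printing Implicit Defensive.
Import Order.TTheory GRing.Theory Num.Theory.

Definition simple_graph (T : finType) (e : rel T) : Prop :=
  symmetric e /\ irreflexive e.

Definition independent (T : finType) (e : rel T) (X : {set T}) : bool :=
  [forall x in X, forall y in X, ~~ e x y].

Definition nbhd (T : finType) (e : rel T) (X : {set T}) : {set T} :=
  [set v | (v \notin X) && [exists u in X, e u v]].

Definition surplus_ge (T : finType) (e : rel T) (s : nat) : Prop :=
  forall X : {set T}, X != finset.set0 -> independent e X -> (#|X| + s <= #|nbhd e X|)%N.

Local Open Scope ring_scope.
Local Open Scope classical_set_scope.

(* Feasible fractional vertex covers of the subgraph of (T,e) induced on V. *)
Definition lp_feasible (R : realType) (T : finType) (e : rel T) (V : {set T})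
  (x : T -> R) : Prop :=
  (forall u v, u \in V -> v \in V -> e u v -> 1 <= x u + x v) /\
  (forall v, v \in V -> 0 <= x v <= 1).

(* LP(G[V]) : optimum (= infimum, attained) of sum_{v in V} x_v over feasible x *)
Definition LP (R : realType) (T : finType) (e : rel T) (V : {set T}) : R :=
  inf [set (\sum_(v in V) x v) | x in [set x : T -> R | lp_feasible e V x]].

From mathcomp Require Import all_boot all_order all_algebra.
From mathcomp Require Import boolp classical_sets reals.
From mathcomp Require Import lra zify.
Set Implicit Arguments. Unset Strict Implicit. Unset Printing Implicit Defensive.
Import Order.TTheory GRing.Theory Num.Theory.
Local Open Scope ring_scope.

(* For a feasible x on a vertex set V missing at most s vertices of G,
   the vertices with x_v <= 1/2 - t form an independent set whose neighbours
   all have x_v >= 1/2 + t unless they were deleted.  Surplus >= s therefore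
   makes every lower tail of x - 1/2 at most as large as the matching upper
   tail, which forces sum_V (x_v - 1/2) >= 0.  Hence LP(G[V]) = |V|/2,
   attained by the all-1/2 vector, for V = V(G) and for V = V(G) - S. *)

Section TailDomination.

Variables (R : realDomainType) (T : finType) (f : T -> R).

Definition tail_dominated (A : {set T}) : Prop :=
  forall t : R, 0 < t ->
    leq #|[set v in A | f v <= - t]| #|[set v in A | t <= f v]|.

Lemma tail_dominated_setD2 (A : {set T}) (w u : T) :
  w \in A -> u \in A -> u != w -> (forall v, v \in A -> f w <= f v) ->
  - f w <= f u -> tail_dominated A -> tail_dominated (A :\ w :\ u).
Proof.
move=> wA uA uw wmin hu hA t t0.
case: (leP t (- f w)) => htw; last first.
  rewrite (_ : [set v in _ | f v <= - t] = finset.set0) ?cards0 //.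
  apply/setP => v; rewrite !inE; apply/negP => /andP [/and3P [_ _ vA] hv].
  have := wmin v vA; lra.
have low : [set v in A :\ w :\ u | f v <= - t] = [set v in A | f v <= - t] :\ w.
  apply/setP => v; rewrite !inE.
  case: (eqVneq v u) => [->|vu] /=; last by rewrite andbA.
  rewrite uw uA /=; apply/esym/negP => h; lra.
have high : [set v in A :\ w :\ u | t <= f v] = [set v in A | t <= f v] :\ u.
  apply/setP => v; rewrite !inE.
  case: (eqVneq v w) => [->|vw] /=; last by rewrite andbA.
  have /negbTE -> : ~~ (t <= f w) by rewrite -ltNge; lra.
  by rewrite !andbF.
have := cardsD1 w [set v in A | f v <= - t].
have := cardsD1 u [set v in A | t <= f v].
have [fw_low fu_high] : f w <= - t /\ t <= f u by split; lra.
rewrite !inE wA uA fw_low fu_high /=.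
have := hA t t0; rewrite low high; lia.
Qed.

(* Pair the minimum w, if negative, with an element u where f u >= - f w
   (it exists by domination at t = - f w) and remove both. *)
Lemma sumr_ge0_tail_dominated (A : {set T}) :
  tail_dominated A -> 0 <= \sum_(v in A) f v.
Proof.
move: {2}#|A| (leqnn #|A|) => n; elim: n A => [|n IH] A hA dom.
  by move: hA; rewrite leqn0 cards_eq0 => /eqP ->; rewrite big_set0.
have [/existsP [w0 /andP [w0A fw0]] | /existsPn nonneg] :=
  boolP [exists v in A, f v < 0]; last first.
  by apply: sumr_ge0 => v vA; move: (nonneg v); rewrite vA /= -leNgt.
pose w := [arg min_(i < w0 in A) f i]%O.
have [wA wmin] : w \in A /\ forall v, v \in A -> f w <= f v.
  by rewrite /w; case: arg_minP => // i iA H; split => // v /H.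
have fw_lt0 : f w < 0 by apply: le_lt_trans (wmin _ w0A) fw0.
have /card_gt0P [u] : (0 < #|[set v in A | (- f w <= f v)%R]|)%N.
  apply: leq_trans (dom _ _); last by rewrite oppr_gt0.
  by apply/card_gt0P; exists w; rewrite inE wA opprK lexx.
rewrite inE => /andP [uA hu].
have uw : u != w by apply: contraTneq hu => ->; rewrite -ltNge; lra.
have cardA : #|A| = (#|A :\ w :\ u|).+2.
  by rewrite (cardsD1 w A) wA (cardsD1 u (A :\ w)) !inE uw uA.
have rest : 0 <= \sum_(v in A :\ w :\ u) f v.
  by apply: IH; [lia | exact: tail_dominated_setD2].
have uAw : (u \in A) && (u != w) by rewrite uA uw.
rewrite (bigD1 w wA) (bigD1 u uAw) /=.
rewrite (eq_bigl (fun v => v \in A :\ w :\ u)); first lra.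
by move=> v; rewrite !inE; case: (v != w); case: (v != u); rewrite ?andbT ?andbF.
Qed.

End TailDomination.

Section HalfIntegralLP.

Variables (R : realType) (T : finType) (e : rel T) (k : nat).
Hypothesis surplus_k : surplus_ge e k.

Lemma lp_feasible_const_half (V : {set T}) : lp_feasible e V (fun=> 1 / 2 : R).
Proof. by split => [u v _ _ _|v _]; lra. Qed.

Lemma lp_feasible_tail_dominated (V : {set T}) (x : T -> R) :
  (#|~: V| <= k)%N -> lp_feasible e V x ->
  tail_dominated (fun v => x v - 1 / 2) V.
Proof.
move=> missing [cover _] t t0.
set X := [set v in V | x v - 1 / 2 <= - t].
set Y := [set v in V | t <= x v - 1 / 2].
have [->|X_neq0] := eqVneq X finset.set0; first by rewrite cards0.
have indepX : independent e X.
  apply/forallP => a; apply/implyP; rewrite inE => /andP [aV ha].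
  apply/forallP => b; apply/implyP; rewrite inE => /andP [bV hb].
  by apply/negP => /(cover a b aV bV); lra.
have nbhdX : nbhd e X \subset Y :|: ~: V.
  apply/fintype.subsetP => v; rewrite !inE => /andP [_ /existsP [u /andP [uX euv]]].
  have [vV|] //= := boolP (v \in V); rewrite orbF.
  move: uX; rewrite inE => /andP [uV hu].
  by have := cover u v uV vV euv; lra.
have := subset_leq_card nbhdX; have := surplus_k X_neq0 indepX.
rewrite cardsU; lia.
Qed.

Lemma LP_eq_half_card (V : {set T}) :
  (#|~: V| <= k)%N -> LP R e V = #|V|%:R / 2.
Proof.
move=> missing; rewrite /LP; set E := (X in inf X).
have half_in_E : E (#|V|%:R / 2).
  exists (fun=> 1 / 2); first exact: lp_feasible_const_half.
  by rewrite sumr_const -mulr_natr; lra.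
have half_lb : lbound E (#|V|%:R / 2).
  move=> _ [x feas <-].
  have := sumr_ge0_tail_dominated (lp_feasible_tail_dominated missing feas).
  by rewrite sumrB sumr_const -mulr_natr; lra.
apply/le_anti/andP; split.
  by apply: ge_inf => //; exists (#|V|%:R / 2).
by apply: lb_le_inf => //; exists (#|V|%:R / 2).
Qed.

End HalfIntegralLP.

Theorem lemma3 (R : realType) (T : finType) (e : rel T) (s : nat)
  (hG : simple_graph e) (hsur : surplus_ge e s)
  (S : {set T}) (hS : #|S| = s) :
  LP R e (~: S) = LP R e [set: T] - s%:R / 2.
Proof.
rewrite (LP_eq_half_card R hsur) ?finset.setCK ?hS //.
rewrite (LP_eq_half_card R hsur) ?finset.setCT ?cards0 //.
have := cardsC S; rewrite cardsT hS => <-.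
by rewrite natrD; lra.
Qed.
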